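(* Let $\beta>1$ and $C_\beta=2+\frac{2(\beta-1)^2}{2\beta-1}$. For all $x,y\in\mathbb{R}$, $$2\big(x|x|^{\beta-1}-y|y|^{\beta-1}\big)^2-C_\beta(x-y)\big(x|x|^{2(\beta-1)}-y|y|^{2(\beta-1)}\big)\le0.$$ *)

From HB Require Import structures.
From mathcomp Require Import all_boot all_order all_algebra.
From mathcomp Require Import all_classical all_reals all_analysis.

From HB Require Import structures.
From mathcomp Require Import all_boot all_order all_algebra.
From mathcomp Require Import all_classical all_reals all_analysis.
From mathcomp Require Import ring lra.
Import Order.TTheory GRing.Theory Num.Theory.
Local Open Scope ring_scope.

(* Put a = beta - 1 and, for a real parameter l, let P_l be the
   odd primitive of t |-> (|t|^a - l)^2, namely
     P_l t = t|t|^(2a) / (1 + 2a) - 2 l t|t|^a / (1 + a) + l^2 t.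
   P_l is nondecreasing, so P_l x - P_l y >= 0 when y <= x.  For the choice
   l = (x|x|^a - y|y|^a) / ((1 + a)(x - y)) this difference is exactly the
   negated left-hand side of the theorem divided by 2 (1 + a)^2 (x - y). *)

Lemma mulr_normr_powR (R : realType) (b t : R) : 0 < 1 + b -> 0 <= t ->
  t * `|t| `^ b = t `^ (1 + b).
Proof.
move=> b1; rewrite le_eqVlt => /orP[/eqP<-|t0]; first by rewrite mul0r powR0 ?gt_eqF.
by rewrite gtr0_norm // -(mulr_powRB1 (ltW t0) b1) addrAC subrr add0r.
Qed.

Lemma powR_mul2r (R : realType) (a t : R) : 0 <= t -> t `^ (2 * a) = (t `^ a) ^+ 2.
Proof. by move=> t0; rewrite mulrC powRrM powR_mulrn ?powR_ge0. Qed.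

Section SquareGapPrimitive.
Variables (R : realType) (a l : R).
Hypothesis a_gt0 : 0 < a.

Let a1_gt0 : 0 < 1 + a. Proof. by rewrite addr_gt0. Qed.
Let a2_gt0 : 0 < 1 + 2 * a. Proof. by rewrite addr_gt0 ?mulr_gt0. Qed.

Definition sqgap_primitive (t : R) : R :=
  t * `|t| `^ (2 * a) / (1 + 2 * a) - 2 * l * (t * `|t| `^ a) / (1 + a) + l ^+ 2 * t.

(* On [0, +oo[ the primitive is a combination of real powers, which the
   derivative calculus handles; |t| is avoided there. *)
Let sqgap_primitive_pos : R -> R :=
  ((1 + 2 * a)^-1 \*: (fun t => t `^ (1 + 2 * a)))
  - ((2 * l / (1 + a)) \*: (fun t => t `^ (1 + a))) + (l ^+ 2 \*: id).

Let sqgap_primitive_posE (t : R) : 0 <= t -> sqgap_primitive t = sqgap_primitive_pos t.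
Proof.
move=> t0; rewrite /sqgap_primitive !mulr_normr_powR //.
by rewrite /sqgap_primitive_pos !fctE /= /GRing.scale /=; ring.
Qed.

Let is_derive_sqgap_primitive_pos {x : R} : 0 < x ->
  is_derive x 1 sqgap_primitive_pos ((x `^ a - l) ^+ 2).
Proof.
move=> x0.
have D := is_deriveD (is_deriveB
   (is_deriveZ (1 + 2 * a)^-1 (is_derive1_powR (1 + 2 * a) x0))
   (is_deriveZ (2 * l / (1 + a)) (is_derive1_powR (1 + a) x0)))
   (is_deriveZ (l ^+ 2) (@is_derive_id _ _ x 1)).
apply: DeriveDef; first by case: D.
rewrite (@derive_val _ _ _ _ _ _ _ D) (_ : 1 + 2 * a - 1 = 2 * a); last by ring.
rewrite (_ : 1 + a - 1 = a); last by ring.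
rewrite powR_mul2r ?(ltW x0) // /GRing.scale /=.
by field; rewrite (gt_eqF a1_gt0) (gt_eqF a2_gt0).
Qed.

Lemma sqgap_primitiveN (t : R) : sqgap_primitive (- t) = - sqgap_primitive t.
Proof. by rewrite /sqgap_primitive normrN; ring. Qed.

Lemma sqgap_primitive_ge0 (t : R) : 0 <= t -> 0 <= sqgap_primitive t.
Proof.
move=> t0; rewrite /sqgap_primitive ger0_norm // powR_mul2r //.
set u := t `^ a.
have -> : t * u ^+ 2 / (1 + 2 * a) - 2 * l * (t * u) / (1 + a) + l ^+ 2 * t =
    t * ((l - u / (1 + a)) ^+ 2 + (u * a) ^+ 2 / ((1 + 2 * a) * (1 + a) ^+ 2)).
  by field; rewrite (gt_eqF a1_gt0) (gt_eqF a2_gt0).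
by rewrite mulr_ge0 // addr_ge0 ?sqr_ge0 // divr_ge0 ?sqr_ge0 // mulr_ge0 ?sqr_ge0 ?(ltW a2_gt0).
Qed.

Lemma sqgap_primitive_ndecr_pos (s t : R) : 0 < s -> s <= t ->
  sqgap_primitive s <= sqgap_primitive t.
Proof.
move=> s0 st; rewrite !sqgap_primitive_posE; try lra.
have pos x : x \in `]s, t[ -> 0 < x by rewrite in_itv /= => /andP[? ?]; lra.
apply: (@ger0_derive1_ndecr _ _ s t) => //.
- by move=> x /pos x0; case: (is_derive_sqgap_primitive_pos x0).
- move=> x /pos x0.
  by rewrite derive1E (@derive_val _ _ _ _ _ _ _ (is_derive_sqgap_primitive_pos x0)) sqr_ge0.
- apply: derivable_within_continuous => x; rewrite in_itv /= => /andP[? ?].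
  by have /is_derive_sqgap_primitive_pos[] : 0 < x by lra.
Qed.

Lemma sqgap_primitive_ndecr : {homo sqgap_primitive : s t / s <= t}.
Proof.
move=> s t st; have [s0|s0] := ltP 0 s; first exact: sqgap_primitive_ndecr_pos.
have [t0|t0] := leP 0 t.
  apply: (@le_trans _ _ 0); last exact: sqgap_primitive_ge0.
  by rewrite -[s]opprK sqgap_primitiveN oppr_le0 sqgap_primitive_ge0 // oppr_ge0.
rewrite -lerN2 -!sqgap_primitiveN sqgap_primitive_ndecr_pos //; lra.
Qed.

End SquareGapPrimitive.

Arguments sqgap_primitive {R}.

Lemma signed_powR_ineq (R : realType) (a x y : R) : 0 < a ->
  2 * (x * `|x| `^ a - y * `|y| `^ a) ^+ 2
  - (2 + 2 * a ^+ 2 / (1 + 2 * a)) * (x - y) * (x * `|x| `^ (2 * a) - y * `|y| `^ (2 * a))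
  <= 0.
Proof.
move=> a0; wlog yx : x y / y < x.
  move=> wlog_yx; have [|/wlog_yx|->] := ltgtP y x; first exact: wlog_yx.
    rewrite -(opprB x y) -(opprB (x * `|x| `^ a)) -(opprB (x * `|x| `^ (2 * a))).
    by rewrite sqrrN !mulrN mulNr opprK.
  by rewrite !subrr mulr0 expr0n /= mulr0 subr0.
set F := x * `|x| `^ a - y * `|y| `^ a.
set G := x * `|x| `^ (2 * a) - y * `|y| `^ (2 * a).
set l := F / ((1 + a) * (x - y)).
have -> : 2 * F ^+ 2 - (2 + 2 * a ^+ 2 / (1 + 2 * a)) * (x - y) * G =
    - (2 * (1 + a) ^+ 2 * (x - y)) * (sqgap_primitive a l x - sqgap_primitive a l y).
  by rewrite /sqgap_primitive /l /F /G; field; rewrite !gt_eqF //; lra.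
rewrite mulNr oppr_le0 mulr_ge0 ?subr_ge0 ?sqgap_primitive_ndecr ?(ltW yx) //.
by rewrite !mulr_ge0 ?sqr_ge0 //; lra.
Qed.

Theorem lemmaB3 (R : realType) (beta : R) (hbeta : 1 < beta) (x y : R) :
  let C := 2 + 2 * (beta - 1) ^+ 2 / (2 * beta - 1) in
  2 * (x * (`|x| `^ (beta - 1)) - y * (`|y| `^ (beta - 1))) ^+ 2
  - C * (x - y) * (x * (`|x| `^ (2 * (beta - 1))) - y * (`|y| `^ (2 * (beta - 1))))
  <= 0.
Proof.
rewrite /= (_ : 2 * beta - 1 = 1 + 2 * (beta - 1)); last by ring.
by apply: signed_powR_ineq; lra.
Qed.
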